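(* Let $$\alpha=\frac{1}{3}\left(3+\sqrt[3]{\tfrac12\left(27-3\sqrt{69}\right)}+\sqrt[3]{\tfrac12\left(27+3\sqrt{69}\right)}\right)\approx 2.3247,$$ $$\beta=\frac{1}{3}\left(2+\sqrt[3]{\tfrac12\left(97-3\sqrt{69}\right)}+\sqrt[3]{\tfrac12\left(97+3\sqrt{69}\right)}\right)\approx 3.0796,$$ let $g(x)=\alpha x(1-x)$, $h(x)=\beta x(1-x)$, and let $$p_\pm=\frac{\beta+1\pm\sqrt{(\beta+1)(\beta-3)}}{2\beta}$$ be the period-2 points of $h$. Then (a) $p_-=\frac{\alpha-1}{\alpha}$, (b) $h\!\left(\frac1\alpha\right)=p_+$, and (c) $g(p_+)=\frac1\alpha$. Consequently the set $\Lambda=\left\{\frac{\alpha-1}{\alpha},\ \frac1\alpha,\ p_+\right\}$ consists of three points, satisfies $\Lambda=g(\Lambda)\cup h(\Lambda)$ (a 3-point toss-and-catch), and contains the bridging point $\frac1\alpha$, which is a periodic point of neither $g$ nor $h$.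
   Context: For $\gamma\in\mathbb{R}$ let $f_\gamma(x)=\gamma x(1-x)$ denote the logistic map; its nontrivial fixed point is $\frac{\gamma-1}{\gamma}$. The logistic IFS is the pair $\{g,h\}=\{f_\alpha,f_\beta\}$ with $\alpha<\beta$, where at each step $g$ is applied with probability $p\in(0,1)$ and $h$ with probability $1-p$, independently. An invariant set of the IFS is a set $\Lambda$ with $\Lambda=g(\Lambda)\cup h(\Lambda)$; a finite invariant set with $n$ points is called an $n$-point toss-and-catch. A bridging point is a point of $\Lambda$ that belongs to neither the union $\Lambda_g$ of all periodic orbits of $g$ nor the union $\Lambda_h$ of all periodic orbits of $h$. *)

From Stdlib Require Import Reals Lra.
Open Scope R_scope.

Definition cbrt (x : R) : R :=
  if Rlt_dec 0 x then Rpower x (1/3)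
  else if Rlt_dec x 0 then - Rpower (- x) (1/3)
  else 0.

Definition logistic (gamma x : R) : R := gamma * x * (1 - x).

Fixpoint iterate (f : R -> R) (n : nat) (x : R) : R :=
  match n with
  | O => x
  | S k => f (iterate f k x)
  end.

Definition periodic_point (f : R -> R) (x : R) : Prop :=
  exists n : nat, (0 < n)%nat /\ iterate f n x = x.

(* Lambda_f : union of all periodic orbits of f = set of periodic points. *)
Definition periodic_set (f : R -> R) : R -> Prop := periodic_point f.

Definition ifs_invariant (g h : R -> R) (L : R -> Prop) : Prop :=
  forall y, L y <-> exists x, L x /\ (y = g x \/ y = h x).

Definition bridging_point (g h : R -> R) (L : R -> Prop) (x : R) : Prop :=
  L x /\ ~ periodic_set g x /\ ~ periodic_set h x.

Definition alpha0 : R :=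
  (3 + cbrt ((27 - 3 * sqrt 69) / 2) + cbrt ((27 + 3 * sqrt 69) / 2)) / 3.
Definition beta0 : R :=
  (2 + cbrt ((97 - 3 * sqrt 69) / 2) + cbrt ((97 + 3 * sqrt 69) / 2)) / 3.

Definition p_plus : R :=
  (beta0 + 1 + sqrt ((beta0 + 1) * (beta0 - 3))) / (2 * beta0).
Definition p_minus : R :=
  (beta0 + 1 - sqrt ((beta0 + 1) * (beta0 - 3))) / (2 * beta0).

Definition Lambda0 (x : R) : Prop :=
  x = (alpha0 - 1) / alpha0 \/ x = 1 / alpha0 \/ x = p_plus.

(* alpha - 1 is the plastic number (the real root of t^3 = t + 1): the radical
   expression for alpha is Cardano's formula for (a - 1)^3 = a, and the one for
   beta is Cardano's formula for b^3 = 2 b^2 + 3 b + 1.  Modulo (a - 1)^3 = a,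
   a^2 - a is again a root of the second cubic, which has a single real root,
   so beta = alpha^2 - alpha.  Then sqrt((beta + 1)(beta - 3)) = 3 alpha -
   alpha^2 - 1, whence p_- = (alpha - 1)/alpha and p_+ = 1/(alpha - 1), and
   every claimed relation is a rational identity modulo the cubic:
     g : 1/alpha -> (alpha - 1)/alpha (fixed),  1/(alpha - 1) -> 1/alpha,
     h : 1/alpha, (alpha - 1)/alpha -> 1/(alpha - 1) -> (alpha - 1)/alpha.
   The forward orbits of 1/alpha under g and under h stay in sets avoiding
   1/alpha, so it is a bridging point. *)

From Stdlib Require Import Reals Lra Psatz Lia.
Open Scope R_scope.

Lemma Rpower_third_cube (x : R) : 0 < x -> Rpower x (1 / 3) ^ 3 = x.
Proof.
  intros Hx.
  rewrite <- Rpower_pow by apply exp_pos.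
  rewrite Rpower_mult.
  replace (1 / 3 * INR 3) with 1 by (simpl; field).
  now apply Rpower_1.
Qed.

Lemma cbrt_pos (x : R) : 0 < x -> 0 < cbrt x.
Proof.
  intros Hx. unfold cbrt.
  destruct (Rlt_dec 0 x); [apply exp_pos | lra].
Qed.

Lemma cbrt_cube (x : R) : cbrt x ^ 3 = x.
Proof.
  unfold cbrt.
  destruct (Rlt_dec 0 x) as [Hx | Hx].
  - now apply Rpower_third_cube.
  - destruct (Rlt_dec x 0) as [Hx' | Hx'].
    + replace ((- Rpower (- x) (1 / 3)) ^ 3) with (- (Rpower (- x) (1 / 3) ^ 3))
        by ring.
      rewrite Rpower_third_cube; lra.
    + simpl; lra.
Qed.

Lemma pow3_inj_pos (x y : R) : 0 < x -> 0 < y -> x ^ 3 = y ^ 3 -> x = y.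
Proof.
  intros Hx Hy E.
  assert (F : (x - y) * (x ^ 2 + x * y + y ^ 2) = 0).
  { replace ((x - y) * (x ^ 2 + x * y + y ^ 2)) with (x ^ 3 - y ^ 3) by ring. lra. }
  apply Rmult_integral in F as [F | F]; nra.
Qed.

Lemma cbrt_sum_cube (A B P : R) :
  0 < A -> 0 < B -> 0 < P -> A * B = P ^ 3 ->
  (cbrt A + cbrt B) ^ 3 = 3 * P * (cbrt A + cbrt B) + (A + B).
Proof.
  intros HA HB HP HAB.
  assert (Hprod : cbrt A * cbrt B = P).
  { pose proof (cbrt_pos A HA). pose proof (cbrt_pos B HB).
    apply pow3_inj_pos; [nra | exact HP |].
    now rewrite Rpow_mult_distr, !cbrt_cube. }
  replace ((cbrt A + cbrt B) ^ 3)
    with (cbrt A ^ 3 + cbrt B ^ 3 + 3 * (cbrt A * cbrt B) * (cbrt A + cbrt B)) by ring.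
  rewrite !cbrt_cube, Hprod; ring.
Qed.

Lemma sqrt69_bounds : 0 <= sqrt 69 < 9 /\ sqrt 69 * sqrt 69 = 69.
Proof.
  pose proof (sqrt_pos 69). pose proof (sqrt_sqrt 69 ltac:(lra)). nra.
Qed.

Lemma alpha0_cubic : (alpha0 - 1) ^ 3 = alpha0.
Proof.
  destruct sqrt69_bounds as [Hs Hss].
  assert (E := cbrt_sum_cube ((27 - 3 * sqrt 69) / 2) ((27 + 3 * sqrt 69) / 2) 3
                 ltac:(lra) ltac:(lra) ltac:(lra) ltac:(nra)).
  unfold alpha0. nra.
Qed.

Lemma beta0_cubic : beta0 ^ 3 = 2 * beta0 ^ 2 + 3 * beta0 + 1.
Proof.
  destruct sqrt69_bounds as [Hs Hss].
  assert (E := cbrt_sum_cube ((97 - 3 * sqrt 69) / 2) ((97 + 3 * sqrt 69) / 2) 13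
                 ltac:(lra) ltac:(lra) ltac:(lra) ltac:(nra)).
  unfold beta0. nra.
Qed.

Lemma plastic_number_bounds (t : R) : t ^ 3 = t + 1 -> 1 < t < 3 / 2.
Proof.
  intros Ht.
  assert (Hpos : 0 < t).
  { destruct (Rle_or_lt t 0) as [Hle | Hlt]; [| exact Hlt].
    assert (t <= -1) by nra. nra. }
  split; nra.
Qed.

Lemma beta_cubic_gt3 (b : R) : b ^ 3 = 2 * b ^ 2 + 3 * b + 1 -> 3 < b.
Proof.
  intros Hb.
  assert (Hf : b * (b - 3) * (b + 1) = 1) by nra.
  (* The product is positive only for b > 3 or -1 < b < 0, and below 1 on (-1, 0). *)
  destruct (Rle_or_lt b 0) as [Hneg | Hpos]; [| nra].
  assert (-1 < b) by nra.
  assert (0 <= (b * (b + 1) + 1 / 4) * (3 - b)).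
  { apply Rmult_le_pos; [pose proof (pow2_ge_0 (b + 1 / 2)) |]; lra. }
  nra.
Qed.

Lemma beta_cubic_unique (b c : R) :
  b ^ 3 = 2 * b ^ 2 + 3 * b + 1 -> c ^ 3 = 2 * c ^ 2 + 3 * c + 1 -> b = c.
Proof.
  intros Hb Hc.
  pose proof (beta_cubic_gt3 b Hb). pose proof (beta_cubic_gt3 c Hc).
  assert (F : (b - c) * (b ^ 2 + b * c + c ^ 2 - 2 * b - 2 * c - 3) = 0) by nra.
  apply Rmult_integral in F as [F | F]; nra.
Qed.

Lemma logistic_fixed_point (gamma : R) :
  gamma <> 0 -> logistic gamma ((gamma - 1) / gamma) = (gamma - 1) / gamma.
Proof. intros Hg. unfold logistic. field. exact Hg. Qed.

Lemma logistic_inv (gamma : R) :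
  gamma <> 0 -> logistic gamma (1 / gamma) = (gamma - 1) / gamma.
Proof. intros Hg. unfold logistic. field. exact Hg. Qed.

Lemma iterate_forward_invariant (f : R -> R) (S : R -> Prop) (x : R) :
  (forall z, S z -> S (f z)) -> S (f x) ->
  forall n, (0 < n)%nat -> S (iterate f n x).
Proof.
  intros Hinv Hx n Hn.
  destruct n as [| n]; [lia |].
  induction n as [| n IH]; [exact Hx |].
  apply Hinv, IH. lia.
Qed.

Lemma not_periodic_of_forward_invariant (f : R -> R) (S : R -> Prop) (x : R) :
  (forall z, S z -> S (f z)) -> S (f x) -> ~ S x -> ~ periodic_point f x.
Proof.
  intros Hinv Hx Hnx [n [Hn Hper]].
  apply Hnx. rewrite <- Hper.
  exact (iterate_forward_invariant f S x Hinv Hx n Hn).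
Qed.

Lemma ifs_invariant_intro (g h : R -> R) (L : R -> Prop) :
  (forall x, L x -> L (g x) /\ L (h x)) ->
  (forall y, L y -> exists x, L x /\ (y = g x \/ y = h x)) ->
  ifs_invariant g h L.
Proof.
  intros Himg Hcov y. split; [apply Hcov |].
  intros [x [Hx [-> | ->]]]; apply Himg, Hx.
Qed.

Section PlasticOrbit.

Variable a : R.
Hypothesis Ha : (a - 1) ^ 3 = a.

Lemma plastic_shift_bounds : 2 < a < 5 / 2.
Proof.
  assert (Ht : (a - 1) ^ 3 = (a - 1) + 1) by lra.
  pose proof (plastic_number_bounds (a - 1) Ht). lra.
Qed.

Lemma plastic_shift_sq_sub_cubic :
  (a ^ 2 - a) ^ 3 = 2 * (a ^ 2 - a) ^ 2 + 3 * (a ^ 2 - a) + 1.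
Proof. nra. Qed.

Lemma sqrt_period2_discr :
  sqrt ((a ^ 2 - a + 1) * (a ^ 2 - a - 3)) = 3 * a - a ^ 2 - 1.
Proof.
  pose proof plastic_shift_bounds.
  replace ((a ^ 2 - a + 1) * (a ^ 2 - a - 3)) with ((3 * a - a ^ 2 - 1) ^ 2) by nra.
  apply sqrt_pow2. nra.
Qed.

Lemma logistic_inv_pred : logistic a (1 / (a - 1)) = 1 / a.
Proof.
  pose proof plastic_shift_bounds. unfold logistic.
  field_simplify_eq; [nra | repeat split; lra].
Qed.

Lemma logistic_sq_sub_inv : logistic (a ^ 2 - a) (1 / a) = 1 / (a - 1).
Proof.
  pose proof plastic_shift_bounds. unfold logistic.
  field_simplify_eq; [nra | repeat split; lra].
Qed.

Lemma logistic_sq_sub_fixed :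
  logistic (a ^ 2 - a) ((a - 1) / a) = 1 / (a - 1).
Proof.
  pose proof plastic_shift_bounds. unfold logistic.
  field_simplify_eq; [nra | repeat split; lra].
Qed.

Lemma logistic_sq_sub_inv_pred :
  logistic (a ^ 2 - a) (1 / (a - 1)) = (a - 1) / a.
Proof.
  pose proof plastic_shift_bounds. unfold logistic.
  field_simplify_eq; [nra | repeat split; lra].
Qed.

Lemma plastic_orbit_distinct :
  (a - 1) / a <> 1 / a /\ (a - 1) / a <> 1 / (a - 1) /\ 1 / a <> 1 / (a - 1).
Proof.
  pose proof plastic_shift_bounds.
  repeat split; intros E; field_simplify_eq in E; nra.
Qed.

Lemma plastic_toss_and_catch :
  ifs_invariant (logistic a) (logistic (a ^ 2 - a))
    (fun x => x = (a - 1) / a \/ x = 1 / a \/ x = 1 / (a - 1)).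
Proof.
  pose proof plastic_shift_bounds.
  assert (Ha0 : a <> 0) by lra.
  apply ifs_invariant_intro.
  - intros x [-> | [-> | ->]].
    + rewrite logistic_fixed_point, logistic_sq_sub_fixed by exact Ha0. tauto.
    + rewrite logistic_inv, logistic_sq_sub_inv by exact Ha0. tauto.
    + rewrite logistic_inv_pred, logistic_sq_sub_inv_pred. tauto.
  - intros y [-> | [-> | ->]].
    + exists ((a - 1) / a). rewrite logistic_fixed_point by exact Ha0. tauto.
    + exists (1 / (a - 1)). rewrite logistic_inv_pred. tauto.
    + exists (1 / a). rewrite logistic_sq_sub_inv. tauto.
Qed.

Lemma plastic_inv_not_periodic :
  ~ periodic_point (logistic a) (1 / a) /\
  ~ periodic_point (logistic (a ^ 2 - a)) (1 / a).
Proof.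
  pose proof plastic_shift_bounds.
  assert (Ha0 : a <> 0) by lra.
  destruct plastic_orbit_distinct as [Hqr [_ Hrp]].
  split.
  - apply (not_periodic_of_forward_invariant _ (fun z => z = (a - 1) / a)).
    + intros z ->. now apply logistic_fixed_point.
    + now apply logistic_inv.
    + auto.
  - apply (not_periodic_of_forward_invariant _
             (fun z => z = 1 / (a - 1) \/ z = (a - 1) / a)).
    + intros z [-> | ->].
      * right. apply logistic_sq_sub_inv_pred.
      * left. apply logistic_sq_sub_fixed.
    + left. apply logistic_sq_sub_inv.
    + intros [E | E]; auto.
Qed.

End PlasticOrbit.

Lemma beta0_eq : beta0 = alpha0 ^ 2 - alpha0.
Proof.
  apply beta_cubic_unique;
    [exact beta0_cubic | exact (plastic_shift_sq_sub_cubic _ alpha0_cubic)].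
Qed.

Lemma p_plus_eq : p_plus = 1 / (alpha0 - 1).
Proof.
  pose proof (plastic_shift_bounds _ alpha0_cubic).
  unfold p_plus. rewrite beta0_eq, (sqrt_period2_discr _ alpha0_cubic).
  field. split; nra.
Qed.

Lemma p_minus_eq : p_minus = (alpha0 - 1) / alpha0.
Proof.
  pose proof (plastic_shift_bounds _ alpha0_cubic).
  unfold p_minus. rewrite beta0_eq, (sqrt_period2_discr _ alpha0_cubic).
  field. split; nra.
Qed.

Theorem mainTheorem2 :
  let g := logistic alpha0 in
  let h := logistic beta0 in
  alpha0 < beta0 /\
  (* p_+ and p_- form the period-2 orbit of h *)
  (p_plus <> p_minus /\ h p_plus = p_minus /\ h p_minus = p_plus) /\
  (* (a), (b), (c) *)
  p_minus = (alpha0 - 1) / alpha0 /\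
  h (1 / alpha0) = p_plus /\
  g p_plus = 1 / alpha0 /\
  (* Lambda has exactly three points *)
  ((alpha0 - 1) / alpha0 <> 1 / alpha0 /\
   (alpha0 - 1) / alpha0 <> p_plus /\
   1 / alpha0 <> p_plus) /\
  (* 3-point toss-and-catch *)
  ifs_invariant g h Lambda0 /\
  (* 1/alpha is a bridging point *)
  bridging_point g h Lambda0 (1 / alpha0).
Proof.
  intros g h; subst g h.
  pose proof alpha0_cubic as Ha.
  pose proof (plastic_shift_bounds _ Ha) as Hbounds.
  destruct (plastic_orbit_distinct _ Ha) as [Hqr [Hqp Hrp]].
  destruct (plastic_inv_not_periodic _ Ha) as [Hg Hh].
  pose proof (logistic_sq_sub_inv_pred _ Ha).
  pose proof (logistic_sq_sub_fixed _ Ha).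
  pose proof (logistic_sq_sub_inv _ Ha).
  pose proof (logistic_inv_pred _ Ha).
  pose proof (plastic_toss_and_catch _ Ha).
  unfold Lambda0, bridging_point, periodic_set.
  rewrite p_plus_eq, p_minus_eq, beta0_eq.
  split; [nra | intuition].
Qed.
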